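(* Let $C<0$, $a\in\mathbb R$, and $\psi(x)=a+\frac12C|x|^2$ on $\mathbb R^3$. Let $T\subset\mathbb R^3$ be an embedded torus of revolution about the $Z$-axis which is a shrinker, $\vec H=C\,F^\perp$ ($F$ the position vector), and is invariant under $z\mapsto -z$; write $T=E\times_\rho S^1$, where $E$ is the generating simple closed curve in the $XZ$-plane (not meeting the $Z$-axis), parametrized by arc length $s$, and $\rho>0$ is the distance to the $Z$-axis. Let $\lambda_0=0<\lambda_1=\lambda_2=1<\dots<\lambda_{2k-1}=\lambda_{2k}=k^2<\dots$ be the eigenvalues of the Laplacian on $S^1$, and for each $i$ let $L^\psi_{\lambda_i}u=u''+\left(\frac{\rho'}{\rho}+\psi'\right)u'-\frac{\lambda_i}{\rho^2}u$ on $E$, a self-adjoint operator on $L^2(E,\rho e^\psi ds)$ whose eigenvalues (i.e. numbers $\mu$ with $L^\psi_{\lambda_i}\phi=-\mu\phi$) are $\mu_0^{\lambda_i}\le\mu_1^{\lambda_i}\le\mu_2^{\lambda_i}\le\dots$. Then $$\inf\{\mu_j^{\lambda_i}\neq0:\ i,j=0,1,2,\dots\}=\min\{\mu_1^{\lambda_0},\mu_2^{\lambda_0},\mu_0^{\lambda_1}\},$$ and if this minimum equals $\mu_0^{\lambda_1}$, then $\mu_0^{\lambda_1}=-C$.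
   Context: Here $\psi$ restricted to $E$ is regarded as a function of $s$ and primes denote $d/ds$. The numbers $\mu_j^{\lambda_i}$ are exactly the eigenvalues of the $\psi$-Laplacian $\Delta_\psi f=\Delta f+\langle\nabla\psi,\nabla f\rangle$ of $T$ with its induced metric and density. *)

From Stdlib Require Import Reals Lra.
From Coquelicot Require Import Coquelicot.
Open Scope R_scope.

Definition R3 := (R * R * R)%type.
Definition v3 (x y z : R) : R3 := (x, y, z).
Definition vx (v : R3) : R := fst (fst v).
Definition vy (v : R3) : R := snd (fst v).
Definition vz (v : R3) : R := snd v.
Definition vadd (u v : R3) : R3 := v3 (vx u + vx v) (vy u + vy v) (vz u + vz v).
Definition vscal (c : R) (v : R3) : R3 := v3 (c * vx v) (c * vy v) (c * vz v).
Definition vdot (u v : R3) : R := vx u * vx v + vy u * vy v + vz u * vz v.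
Definition vcross (u v : R3) : R3 :=
  v3 (vy u * vz v - vz u * vy v) (vz u * vx v - vx u * vz v) (vx u * vy v - vy u * vx v).

Definition d3 (f : R -> R3) (x : R) : R3 :=
  v3 (Derive (fun u => vx (f u)) x) (Derive (fun u => vy (f u)) x)
     (Derive (fun u => vz (f u)) x).

Definition Xs (X : R -> R -> R3) s t := d3 (fun u => X u t) s.
Definition Xt (X : R -> R -> R3) s t := d3 (fun u => X s u) t.
Definition Xss X s t := d3 (fun u => Xs X u t) s.
Definition Xst X s t := d3 (fun u => Xt X u t) s.
Definition Xtt X s t := d3 (fun u => Xt X s u) t.

Definition unormal X s t : R3 :=
  let n := vcross (Xs X s t) (Xt X s t) in vscal (/ sqrt (vdot n n)) n.
Definition nproj X s t (v : R3) : R3 :=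
  vscal (vdot v (unormal X s t)) (unormal X s t).

(** Mean curvature vector  H = (g^{ij} X_ij)^perp  of an immersed surface. *)
Definition meancurv X s t : R3 :=
  let g11 := vdot (Xs X s t) (Xs X s t) in
  let g12 := vdot (Xs X s t) (Xt X s t) in
  let g22 := vdot (Xt X s t) (Xt X s t) in
  let D := g11 * g22 - g12 * g12 in
  nproj X s t
    (vadd (vscal (g22 / D) (Xss X s t))
      (vadd (vscal (2 * (- g12 / D)) (Xst X s t)) (vscal (g11 / D) (Xtt X s t)))).

Definition revsurf (r z : R -> R) (s th : R) : R3 :=
  v3 (r s * cos th) (r s * sin th) (z s).

Definition psiE (a C : R) (r z : R -> R) (s : R) : R :=
  a + / 2 * C * (r s ^ 2 + z s ^ 2).

(** The operator L^psi_lambda on E (rho = r). *)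
Definition Lop (a C : R) (r z : R -> R) (lam : R) (u : R -> R) (s : R) : R :=
  Derive (Derive u) s
  + (Derive r s / r s + Derive (psiE a C r z) s) * Derive u s
  - lam / (r s ^ 2) * u s.

(** phi is an eigenfunction of L_lam with eigenvalue mu (L phi = - mu phi),
    phi a nonzero C^2 function on the closed curve E (Lc-periodic in s). *)
Definition eigpair (a C : R) (r z : R -> R) (Lc lam mu : R) (phi : R -> R) : Prop :=
  (forall s, phi (s + Lc) = phi s) /\
  (forall s, ex_derive phi s /\ ex_derive (Derive phi) s) /\
  (exists s, phi s <> 0) /\
  (forall s, Lop a C r z lam phi s = - mu * phi s).

Fixpoint sumk (n : nat) (f : nat -> R) : R :=
  match n with O => 0 | S m => sumk m f + f m end.

Definition lin_indep (n : nat) (phi : nat -> R -> R) : Prop :=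
  forall c : nat -> R, (forall s, sumk n (fun k => c k * phi k s) = 0) ->
    forall k, (k < n)%nat -> c k = 0.

(** There are at least n eigenvalues <= t, counted with multiplicity. *)
Definition cnt_ge a C r z Lc (lam t : R) (n : nat) : Prop :=
  exists (phi : nat -> R -> R) (mu : nat -> R),
    (forall k, (k < n)%nat -> eigpair a C r z Lc lam (mu k) (phi k) /\ mu k <= t) /\
    lin_indep n phi.

(** mu_j^lam : the j-th eigenvalue (from 0, repeated with multiplicity). *)
Definition mu_ev a C r z Lc (j : nat) (lam : R) : Rbar :=
  Glb_Rbar (fun t => cnt_ge a C r z Lc lam t (S j)).

(** Eigenvalues of the Laplacian on S^1: 0, 1, 1, 4, 4, 9, 9, ... *)
Definition lamS1 (i : nat) : R := (INR (Nat.div (S i) 2)) ^ 2.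

From Stdlib Require Import Reals Lra Lia ZArith.
From Coquelicot Require Import Coquelicot.
Open Scope R_scope.

(* The operators L_lam differ only in their zeroth-order term - lam / rho^2, and on the closed
   curve E a maximum principle does most of the work.  For lam = 0 it shows that the spectrum is
   nonnegative and that 0 is simple (its eigenfunctions are constant); a mean-value estimate on the
   flux rho e^psi phi' shows moreover that the positive eigenvalues stay away from 0.  Hence the
   nonzero eigenvalues for i = 0 start at mu_1^{lam_0} <= mu_2^{lam_0}.
   Written along the profile curve, the shrinker equation H = C F^perp says exactly that
   L_1 rho = C rho, so rho > 0 is an eigenfunction for lam_1 = 1 with eigenvalue - C > 0.  The
   maximum principle applied to phi / rho then shows that every eigenvalue of L_lam with lam >= 1
   is at least - C.  So mu_0^{lam_1} = - C bounds all eigenvalues with i >= 1 from below. *)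

Definition periodic (f : R -> R) (L : R) : Prop := forall s, f (s + L) = f s.

Definition twice_derivable (f : R -> R) : Prop :=
  forall s, ex_derive f s /\ ex_derive (Derive f) s.

Ltac eta_contract :=
  repeat match goal with |- context [fun x : R => ?f x] => change (fun x : R => f x) with f end.

Lemma continuity_pt_of_ex_derive (f : R -> R) x : ex_derive f x -> continuity_pt f x.
Proof. intro H. apply continuity_pt_filterlim. apply (ex_derive_continuous f x H). Qed.

Section Periodic.
Variables (L : R) (f : R -> R).
Hypothesis HL : 0 < L.
Hypothesis Hf : periodic f L.

Lemma periodic_shift_nat n s : f (s + INR n * L) = f s.
Proof.
  induction n as [|n IH].
  - simpl. f_equal. ring.
  - rewrite S_INR. replace (s + (INR n + 1) * L) with ((s + INR n * L) + L) by ring.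
    rewrite Hf. exact IH.
Qed.

Lemma periodic_shift_Z k s : f (s + IZR k * L) = f s.
Proof.
  destruct k as [|p|p].
  - f_equal. simpl. ring.
  - rewrite <- positive_nat_Z, <- INR_IZR_INZ. apply periodic_shift_nat.
  - rewrite <- Pos2Z.opp_pos, opp_IZR, <- positive_nat_Z, <- INR_IZR_INZ.
    rewrite <- (periodic_shift_nat (Pos.to_nat p) (s + - INR (Pos.to_nat p) * L)).
    f_equal. ring.
Qed.

Lemma periodic_reduce s : exists s', 0 <= s' <= L /\ f s = f s'.
Proof.
  destruct (base_Int_part (s / L)) as [H1 H2]. set (k := Int_part (s / L)) in *.
  exists (s + IZR (- k) * L). split.
  - rewrite opp_IZR.
    assert (IZR k * L <= s / L * L) by (apply Rmult_le_compat_r; lra).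
    assert (s / L * L < (IZR k + 1) * L) by (apply Rmult_lt_compat_r; lra).
    replace (s / L * L) with s in * by (field; lra). split; nra.
  - symmetry. apply periodic_shift_Z.
Qed.

Hypothesis Hc : forall s, continuity_pt f s.

Lemma periodic_max : exists s0, 0 <= s0 <= L /\ forall s, f s <= f s0.
Proof.
  destruct (continuity_ab_maj f 0 L) as [M [HM1 HM2]]; [lra | intros; apply Hc |].
  exists M. split; [exact HM2|]. intro s.
  destruct (periodic_reduce s) as [s' [Hs' ->]]. auto.
Qed.

Lemma periodic_min : exists s0, 0 <= s0 <= L /\ forall s, f s0 <= f s.
Proof.
  destruct (continuity_ab_min f 0 L) as [M [HM1 HM2]]; [lra | intros; apply Hc |].
  exists M. split; [exact HM2|]. intro s.
  destruct (periodic_reduce s) as [s' [Hs' ->]]. auto.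
Qed.

End Periodic.

Lemma Derive_at_max (f : R -> R) s0 :
  ex_derive f s0 -> (forall s, f s <= f s0) -> Derive f s0 = 0.
Proof.
  intros Hd Hm. rewrite <- (Derive_Reals f s0 (ex_derive_Reals_0 f s0 Hd)).
  apply (deriv_maximum f (s0 - 1) (s0 + 1)); try lra. intros; auto.
Qed.

Lemma Derive2_at_max (f : R -> R) s0 :
  (forall s, ex_derive f s) -> ex_derive (Derive f) s0 ->
  (forall s, f s <= f s0) -> Derive (Derive f) s0 <= 0.
Proof.
  intros Hd Hd2 Hm. assert (H0 := Derive_at_max f s0 (Hd s0) Hm).
  destruct (Rle_or_lt (Derive (Derive f) s0) 0) as [Hle|Hpos]; [exact Hle|exfalso].
  set (d := Derive (Derive f) s0) in *.
  destruct (proj1 (is_derive_Reals _ _ _) (Derive_correct _ _ Hd2) (d / 2)) as [del Hdel]; [lra|].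
  fold d in Hdel.
  assert (Hincr : forall h, 0 < h < del -> 0 < Derive f (s0 + h)).
  { intros h Hh. assert (h <> 0) by lra.
    assert (Rabs h < del) by (rewrite Rabs_right; lra).
    specialize (Hdel h H H1). rewrite H0, Rminus_0_r in Hdel.
    apply Rabs_def2 in Hdel. destruct Hdel as [_ Hlow].
    assert (0 < Derive f (s0 + h) / h) by lra.
    replace (Derive f (s0 + h)) with (Derive f (s0 + h) / h * h) by (field; lra). nra. }
  pose proof (cond_pos del) as Hdel0.
  destruct (MVT_cor2 f (Derive f) s0 (s0 + del / 2)) as [c [Hmvt Hc]]; [lra| |].
  { intros c _. apply is_derive_Reals, Derive_correct, Hd. }
  assert (0 < Derive f c) by (replace c with (s0 + (c - s0)) by ring; apply Hincr; lra).
  specialize (Hm (s0 + del / 2)). nra.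
Qed.

Lemma periodic_max_C2 (f : R -> R) L : 0 < L -> periodic f L -> twice_derivable f ->
  exists s0, 0 <= s0 <= L /\ (forall s, f s <= f s0) /\
             Derive f s0 = 0 /\ Derive (Derive f) s0 <= 0.
Proof.
  intros HL Hp Hd. destruct (periodic_max L f HL Hp) as [s0 [Hs0 Hmax]].
  { intro; apply continuity_pt_of_ex_derive, Hd. }
  exists s0. repeat split; try lra; auto.
  - apply Derive_at_max; [apply Hd | exact Hmax].
  - apply Derive2_at_max; [intro; apply Hd | apply Hd | exact Hmax].
Qed.

Lemma periodic_min_C2 (f : R -> R) L : 0 < L -> periodic f L -> twice_derivable f ->
  exists s0, 0 <= s0 <= L /\ (forall s, f s0 <= f s) /\
             Derive f s0 = 0 /\ 0 <= Derive (Derive f) s0.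
Proof.
  intros HL Hp Hd.
  assert (D1 : forall x, Derive (fun u => - f u) x = - Derive f x) by (intro; apply Derive_opp).
  assert (D2 : forall x, Derive (Derive (fun u => - f u)) x = - Derive (Derive f) x).
  { intro x. rewrite (Derive_ext _ _ x D1). apply Derive_opp. }
  destruct (periodic_max_C2 (fun u => - f u) L HL) as [s0 [Hs0 [Hmax [H1 H2]]]].
  - intro s. rewrite Hp. reflexivity.
  - intro s. split.
    + apply (ex_derive_opp f), Hd.
    + apply (ex_derive_ext (fun x => - Derive f x)); [intro; rewrite D1; reflexivity|].
      apply (ex_derive_opp (Derive f)), Hd.
  - exists s0. rewrite D1 in H1. rewrite D2 in H2.
    repeat split; try lra. intro s. specialize (Hmax s). lra.
Qed.

Section PeriodicODE.
Variables (L : R) (v b c : R -> R).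
Hypothesis HL : 0 < L.
Hypothesis Hper : periodic v L.
Hypothesis Hv : twice_derivable v.
Hypothesis Hode : forall s, Derive (Derive v) s + b s * Derive v s = c s * v s.

Lemma periodic_ode_max : exists s0, 0 <= s0 <= L /\ (forall s, v s <= v s0) /\ c s0 * v s0 <= 0.
Proof.
  destruct (periodic_max_C2 v L HL Hper Hv) as [s0 [Hs0 [Hmax [D1 D2]]]].
  exists s0. repeat split; auto; try lra. rewrite <- Hode, D1. lra.
Qed.

Lemma periodic_ode_min : exists s0, 0 <= s0 <= L /\ (forall s, v s0 <= v s) /\ 0 <= c s0 * v s0.
Proof.
  destruct (periodic_min_C2 v L HL Hper Hv) as [s0 [Hs0 [Hmin [D1 D2]]]].
  exists s0. repeat split; auto; try lra. rewrite <- Hode, D1. lra.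
Qed.

(* Maximum principle: a positive zeroth-order coefficient forbids a positive maximum
   and a negative minimum. *)
Lemma periodic_ode_pos_coef_zero : (forall s, 0 < c s) -> forall s, v s = 0.
Proof.
  intros Hc s.
  destruct periodic_ode_max as [sM [_ [Hmax HM]]].
  destruct periodic_ode_min as [sm [_ [Hmin Hm]]].
  specialize (Hc sM) as HcM. specialize (Hc sm) as Hcm.
  assert (v sM <= 0) by nra. assert (0 <= v sm) by nra.
  specialize (Hmax s). specialize (Hmin s). lra.
Qed.

Lemma periodic_ode_neg_coef_root : (forall s, c s < 0) -> exists s1, 0 <= s1 <= L /\ v s1 = 0.
Proof.
  intros Hc.
  destruct periodic_ode_max as [sM [HsM [_ HM]]].
  destruct periodic_ode_min as [sm [Hsm [_ Hm]]].
  specialize (Hc sM) as HcM. specialize (Hc sm) as Hcm.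
  assert (0 <= v sM) by nra. assert (v sm <= 0) by nra.
  destruct (IVT_gen v sm sM 0) as [s1 [Hs1 Hz]].
  - intro; apply continuity_pt_of_ex_derive, Hv.
  - split; [apply Rle_trans with (v sm); [apply Rmin_l | lra]
           | apply Rle_trans with (v sM); [lra | apply Rmax_r]].
  - exists s1. split; [|exact Hz]. split.
    + apply Rle_trans with (Rmin sm sM); [apply Rmin_glb|]; lra.
    + apply Rle_trans with (Rmax sm sM); [|apply Rmax_lub]; lra.
Qed.

End PeriodicODE.

Lemma is_derive_zero_const (f : R -> R) : (forall x, is_derive f x 0) -> forall x y, f x = f y.
Proof.
  intros Hf x y.
  assert (H : Rabs (f y - f x) <= 0 * Rabs (y - x)).
  { apply (bounded_variation f (fun _ => 0)). intros t _. split; [apply Hf|].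
    rewrite Rabs_R0. lra. }
  rewrite Rmult_0_l in H. pose proof (Rabs_pos (f y - f x)).
  assert (Hz : Rabs (f y - f x) = 0) by lra. apply Rabs_eq_0 in Hz. lra.
Qed.

Lemma periodic_abs_max (f : R -> R) L : 0 < L -> periodic f L -> (forall s, ex_derive f s) ->
  exists s0, 0 <= s0 <= L /\ (forall s, Rabs (f s) <= Rabs (f s0)) /\ f s0 * Derive f s0 = 0.
Proof.
  intros HL Hp Hd.
  destruct (periodic_max L (fun u => f u ^ 2) HL) as [s0 [Hs0 Hmax]].
  - intro s. simpl. rewrite Hp. reflexivity.
  - intro s. apply continuity_pt_of_ex_derive. auto_derive. apply Hd.
  - exists s0. split; [exact Hs0|]. split.
    + intro s. apply Rsqr_le_abs_0. unfold Rsqr. specialize (Hmax s). simpl in Hmax. lra.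
    + assert (H0 := Derive_at_max (fun u => f u ^ 2) s0 ltac:(auto_derive; apply Hd) Hmax).
      assert (HD : Derive (fun u => f u ^ 2) s0 = 2 * (f s0 * Derive f s0)).
      { apply is_derive_unique. auto_derive; [apply Hd | eta_contract; ring]. }
      lra.
Qed.

Section Revolution.
Variables (r z : R -> R).
Hypothesis Hr : forall n s, ex_derive_n r n s.

Lemma Derive_mult_const (f : R -> R) k s : ex_derive f s ->
  Derive (fun u => f u * k) s = Derive f s * k.
Proof. intro H. apply is_derive_unique. auto_derive; auto. rewrite Rmult_1_l. reflexivity. Qed.

Lemma Derive_scal_cos k u : Derive (fun v => k * cos v) u = - k * sin u.
Proof. apply is_derive_unique. auto_derive; auto. ring. Qed.

Lemma Derive_scal_sin k u : Derive (fun v => k * sin v) u = k * cos u.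
Proof. apply is_derive_unique. auto_derive; auto. ring. Qed.

Ltac v3_eq := unfold v3; f_equal; try f_equal; ring.

Lemma revsurf_Xs s : Xs (revsurf r z) s 0 = v3 (Derive r s) 0 (Derive z s).
Proof.
  unfold Xs, d3, revsurf, vx, vy, vz, v3; simpl.
  rewrite !Derive_mult_const by apply (Hr 1%nat). rewrite cos_0, sin_0. v3_eq.
Qed.

Lemma revsurf_Xt s : Xt (revsurf r z) s 0 = v3 0 (r s) 0.
Proof.
  unfold Xt, d3, revsurf, vx, vy, vz, v3; simpl.
  rewrite Derive_scal_cos, Derive_scal_sin, Derive_const, cos_0, sin_0. v3_eq.
Qed.

Lemma revsurf_Xss s :
  Xss (revsurf r z) s 0 = v3 (Derive (Derive r) s) 0 (Derive (Derive z) s).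
Proof.
  unfold Xss, Xs, d3, revsurf, vx, vy, vz, v3; simpl.
  rewrite (Derive_ext (fun u => Derive (fun v => r v * cos 0) u) (fun u => Derive r u * cos 0))
    by (intro; apply Derive_mult_const, (Hr 1%nat)).
  rewrite (Derive_ext (fun u => Derive (fun v => r v * sin 0) u) (fun u => Derive r u * sin 0))
    by (intro; apply Derive_mult_const, (Hr 1%nat)).
  rewrite !Derive_mult_const by apply (Hr 2%nat). rewrite cos_0, sin_0. v3_eq.
Qed.

Lemma revsurf_Xst s : Xst (revsurf r z) s 0 = v3 0 (Derive r s) 0.
Proof.
  unfold Xst, Xt, d3, revsurf, vx, vy, vz, v3; simpl.
  rewrite (Derive_ext (fun u => Derive (fun v => r u * cos v) 0) (fun u => 0))
    by (intro; rewrite Derive_scal_cos, sin_0; ring).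
  rewrite (Derive_ext (fun u => Derive (fun v => r u * sin v) 0) r)
    by (intro; rewrite Derive_scal_sin, cos_0; ring).
  rewrite (Derive_ext (fun u => Derive (fun v => z u) 0) (fun u => 0))
    by (intro; apply Derive_const).
  rewrite Derive_const. reflexivity.
Qed.

Lemma revsurf_Xtt s : Xtt (revsurf r z) s 0 = v3 (- r s) 0 0.
Proof.
  unfold Xtt, Xt, d3, revsurf, vx, vy, vz, v3; simpl.
  rewrite (Derive_ext _ (fun u => - r s * sin u)) by (intro; apply Derive_scal_cos).
  rewrite (Derive_ext (fun u => Derive (fun v => r s * sin v) u) (fun u => r s * cos u))
    by (intro; apply Derive_scal_sin).
  rewrite (Derive_ext (fun u => Derive (fun v => z s) u) (fun u => 0))
    by (intro; apply Derive_const).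
  rewrite Derive_scal_sin, Derive_scal_cos, Derive_const, cos_0, sin_0. v3_eq.
Qed.

End Revolution.

Section Shrinker.
Variables (C a : R) (r z : R -> R).
Hypothesis Hr : forall n s, ex_derive_n r n s.
Hypothesis Hz : forall n s, ex_derive_n z n s.
Hypothesis Hunit : forall s, Derive r s ^ 2 + Derive z s ^ 2 = 1.
Hypothesis Hpos : forall s, 0 < r s.
Hypothesis Hshrink : forall s th, meancurv (revsurf r z) s th =
                                  nproj (revsurf r z) s th (vscal C (revsurf r z s th)).

(* The x- and z-components of H = C F^perp along the meridian th = 0. *)
Lemma shrinker_profile_eq s :
  Derive r s * Derive (Derive z) s - Derive z s * (Derive (Derive r) s - / r s)
  = C * (Derive r s * z s - Derive z s * r s).
Proof.
  specialize (Hshrink s 0) as Hs. pose proof (Hunit s) as Hus. pose proof (Hpos s) as Hps.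
  unfold meancurv, nproj, unormal in Hs. cbv zeta in Hs.
  rewrite (revsurf_Xs r z Hr), revsurf_Xt, (revsurf_Xss r z Hr), revsurf_Xst, revsurf_Xtt in Hs.
  unfold vdot, vcross, vscal, vadd, vx, vy, vz, v3, revsurf in Hs. simpl in Hs.
  rewrite cos_0, sin_0 in Hs.
  set (p := Derive r s) in *. set (q := Derive z s) in *. set (P := Derive (Derive r) s) in *.
  set (Q := Derive (Derive z) s) in *. set (rho := r s) in *. set (Z := z s) in *.
  match type of Hs with context [sqrt ?x] =>
    replace (sqrt x) with rho in Hs
      by (replace x with (rho * rho) by (rewrite <- (Rmult_1_r (rho * rho)), <- Hus; ring);
          symmetry; apply sqrt_square; lra) end.
  injection Hs as Hx _ Hzc.
  replace (/ rho * (0 * 0 - q * rho)) with (- q) in Hx, Hzc by (field; lra).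
  replace (/ rho * (p * rho - 0 * 0)) with p in Hx, Hzc by (field; lra).
  replace (p * p + 0 * 0 + q * q) with 1 in Hx, Hzc by (rewrite <- Hus; ring).
  (* The unit normal at th = 0 is (- q, 0, p); both components of the normal equation
     determine its scalar coefficient because p^2 + q^2 = 1. *)
  assert (Hcancel : forall A B : R, A * - q = B * - q -> A * p = B * p -> A = B).
  { intros A B H1 H2. apply Rminus_diag_uniq.
    transitivity ((A * - q - B * - q) * - q + (A * p - B * p) * p).
    - transitivity ((A - B) * (p ^ 2 + q ^ 2)); [rewrite Hus|]; ring.
    - rewrite H1, H2. ring. }
  pose proof (Hcancel _ _ Hx Hzc) as Heq.
  match type of Heq with ?A = ?B => transitivity A; [field | rewrite Heq; field]; lra end.
Qed.

Lemma Derive_psiE s : Derive (psiE a C r z) s = C * (r s * Derive r s + z s * Derive z s).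
Proof.
  apply is_derive_unique. unfold psiE.
  auto_derive; [split; [apply (Hr 1%nat) | split; [apply (Hz 1%nat) | exact I]] |].
  eta_contract. field.
Qed.

Lemma unit_speed_derive s :
  Derive r s * Derive (Derive r) s + Derive z s * Derive (Derive z) s = 0.
Proof.
  assert (H : is_derive (fun u => Derive r u ^ 2 + Derive z u ^ 2) s
    (2 * (Derive r s * Derive (Derive r) s + Derive z s * Derive (Derive z) s))).
  { auto_derive; [split; [apply (Hr 2%nat) | split; [apply (Hz 2%nat) | exact I]] |].
    eta_contract. ring. }
  apply (is_derive_ext _ (fun _ => 1)) in H; [|exact Hunit].
  apply is_derive_unique in H. rewrite Derive_const in H. lra.
Qed.

Lemma Lop1_r s : Lop a C r z 1 r s = C * r s.
Proof.
  pose proof (shrinker_profile_eq s) as Hprof. pose proof (unit_speed_derive s) as Hacc.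
  pose proof (Hunit s) as Hus. pose proof (Hpos s) as Hps.
  unfold Lop. rewrite Derive_psiE.
  set (p := Derive r s) in *. set (q := Derive z s) in *. set (P := Derive (Derive r) s) in *.
  set (Q := Derive (Derive z) s) in *. set (rho := r s) in *. set (Z := z s) in *.
  (* L_1 rho - C rho combines the profile equation, the derivative of |E'|^2 and |E'|^2 - 1. *)
  assert (E : P + (p / rho + C * (rho * p + Z * q)) * p - 1 / rho ^ 2 * rho - C * rho =
    q * (C * (p * Z - q * rho) - (p * Q - q * (P - / rho))) + p * (p * P + q * Q)
    + (p ^ 2 + q ^ 2 - 1) * (1 / rho + C * rho - P)) by (field; lra).
  rewrite <- Hprof, Hacc, Hus in E. lra.
Qed.

End Shrinker.

Section Counting.
Variables (a C : R) (r z : R -> R) (Lc : R).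

Let mu := mu_ev a C r z Lc.

Lemma mu_ev_le lam j t : cnt_ge a C r z Lc lam t (S j) -> Rbar_le (mu j lam) t.
Proof. intro H. apply (proj1 (Glb_Rbar_correct (fun t => cnt_ge a C r z Lc lam t (S j)))), H. Qed.

Lemma mu_ev_ge lam j (m : Rbar) :
  (forall t, cnt_ge a C r z Lc lam t (S j) -> Rbar_le m t) -> Rbar_le m (mu j lam).
Proof.
  intro H. apply (proj2 (Glb_Rbar_correct (fun t => cnt_ge a C r z Lc lam t (S j)))). exact H.
Qed.

Lemma mu_ev_ge_eigval lam j m :
  (forall mu phi, eigpair a C r z Lc lam mu phi -> m <= mu) -> Rbar_le m (mu j lam).
Proof.
  intro H. apply mu_ev_ge. intros t [phi [mus [Hk _]]].
  destruct (Hk 0%nat (Nat.lt_0_succ j)) as [He Ht]. specialize (H _ _ He). simpl. lra.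
Qed.

Lemma cnt_ge_eigpair lam m phi :
  eigpair a C r z Lc lam m phi -> cnt_ge a C r z Lc lam m 1.
Proof.
  intro He. exists (fun _ => phi), (fun _ => m). split.
  - intros k _. split; [exact He | lra].
  - intros c Hc k Hk. replace k with 0%nat by lia.
    destruct He as [_ [_ [[s Hs] _]]]. specialize (Hc s). simpl in Hc.
    rewrite Rplus_0_l in Hc. apply Rmult_integral in Hc. destruct Hc; [assumption | contradiction].
Qed.

Lemma sumk_ext n f g : (forall k, (k < n)%nat -> f k = g k) -> sumk n f = sumk n g.
Proof. induction n as [|n IH]; intro H; simpl; [reflexivity|]. rewrite IH, H; auto. Qed.

Lemma lin_indep_pred n phi : lin_indep (S n) phi -> lin_indep n phi.
Proof.
  intros H c Hc k Hk.
  set (c' := fun k => if Nat.eq_dec k n then 0 else c k).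
  assert (Hc' : forall k, (k < n)%nat -> c' k = c k).
  { intros k0 Hk0. unfold c'. destruct (Nat.eq_dec k0 n); [lia | reflexivity]. }
  rewrite <- Hc' by exact Hk. apply H; [|lia].
  intro s. simpl. unfold c' at 2. destruct (Nat.eq_dec n n); [|congruence].
  rewrite (sumk_ext n _ (fun k => c k * phi k s)), Hc; [ring|].
  intros; rewrite Hc'; auto.
Qed.

Lemma mu_ev_mono lam j k : (j <= k)%nat -> Rbar_le (mu j lam) (mu k lam).
Proof.
  induction 1 as [|k _ IH]; [apply Rbar_le_refl|].
  eapply Rbar_le_trans; [exact IH|].
  apply mu_ev_ge. intros t [phi [mus [Hk Hli]]]. apply mu_ev_le.
  exists phi, mus. split; [intros; apply Hk; lia | apply lin_indep_pred, Hli].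
Qed.

End Counting.

Lemma lamS1_0 : lamS1 0 = 0.
Proof. unfold lamS1. simpl. ring. Qed.

Lemma lamS1_1 : lamS1 1 = 1.
Proof. unfold lamS1. simpl. ring. Qed.

Lemma lamS1_ge1 i : (1 <= i)%nat -> 1 <= lamS1 i.
Proof.
  intro H. unfold lamS1.
  assert (1 <= INR (S i / 2)) by (apply (le_INR 1); apply Nat.div_str_pos; lia). nra.
Qed.

Section Spectrum.
Variables (C a : R) (r z : R -> R) (Lc : R).
Hypothesis HL : 0 < Lc.
Hypothesis Hr : forall n s, ex_derive_n r n s.
Hypothesis Hz : forall n s, ex_derive_n z n s.
Hypothesis Hper : forall s, r (s + Lc) = r s /\ z (s + Lc) = z s.
Hypothesis Hpos : forall s, 0 < r s.
Hypothesis HLr : forall s, Lop a C r z 1 r s = C * r s.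

Let eig := eigpair a C r z Lc.

Definition drift s := Derive r s / r s + Derive (psiE a C r z) s.

(* rho e^psi, the density of L^2(E, rho e^psi ds) *)
Definition weight s := r s * exp (psiE a C r z s).

Lemma weight_pos s : 0 < weight s.
Proof. apply Rmult_lt_0_compat; [apply Hpos | apply exp_pos]. Qed.

Lemma weight_periodic : periodic weight Lc.
Proof. intro s. unfold weight, psiE. destruct (Hper s) as [-> ->]. reflexivity. Qed.

Lemma weight_derive s : is_derive weight s (weight s * drift s).
Proof.
  unfold weight, drift. rewrite (Derive_psiE C a r z Hr Hz). unfold psiE.
  auto_derive; [repeat split; first [apply (Hr 1%nat) | apply (Hz 1%nat)] |].
  eta_contract. replace (r s * (r s * 1) + z s * (z s * 1)) with (r s ^ 2 + z s ^ 2) by ring.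
  field. apply Rgt_not_eq, Hpos.
Qed.

Lemma weight_flux_derive lam phi s : twice_derivable phi ->
  is_derive (fun u => weight u * Derive phi u) s
            (weight s * (Lop a C r z lam phi s + lam / r s ^ 2 * phi s)).
Proof.
  intro Hphi. unfold Lop. fold (drift s).
  replace (weight s * (Derive (Derive phi) s + drift s * Derive phi s
                       - lam / r s ^ 2 * phi s + lam / r s ^ 2 * phi s))
    with (weight s * drift s * Derive phi s + weight s * Derive (Derive phi) s) by ring.
  apply (is_derive_mult weight (Derive phi));
    [apply weight_derive | apply Derive_correct, Hphi | intros; apply Rmult_comm].
Qed.

Lemma eigpair_ode lam mu phi : eig lam mu phi ->
  forall s, Derive (Derive phi) s + drift s * Derive phi s = (lam / r s ^ 2 - mu) * phi s.
Proof. intros [_ [_ [_ HE]]] s. specialize (HE s). unfold Lop in HE. unfold drift. lra. Qed.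

Lemma eigval_nonneg lam mu phi : 0 <= lam -> eig lam mu phi -> 0 <= mu.
Proof.
  intros Hlam He. destruct (Rle_or_lt 0 mu) as [Hmu|Hmu]; [exact Hmu|exfalso].
  pose proof He as [Hpe [Hd [[s1 Hs1] _]]]. apply Hs1.
  apply (periodic_ode_pos_coef_zero Lc phi drift (fun s => lam / r s ^ 2 - mu) HL Hpe Hd).
  - apply (eigpair_ode lam mu phi He).
  - intro s. assert (0 <= lam / r s ^ 2) by (apply Rdiv_le_0_compat; [lra | apply pow_lt, Hpos]).
    lra.
Qed.

Lemma Lop_ext lam f g s : (forall u, f u = g u) -> Lop a C r z lam f s = Lop a C r z lam g s.
Proof.
  intro H. unfold Lop.
  rewrite (Derive_ext (Derive f) (Derive g) s (fun t => Derive_ext f g t H)).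
  rewrite (Derive_ext f g s H), H. reflexivity.
Qed.

Lemma twice_derivable_div_r phi : twice_derivable phi -> twice_derivable (fun u => phi u / r u).
Proof.
  intros Hphi s. assert (Hr0 : forall u, r u <> 0) by (intro; apply Rgt_not_eq, Hpos).
  split.
  - auto_derive. repeat split; first [apply Hphi | apply (Hr 1%nat) | apply Hr0].
  - apply (ex_derive_ext (fun u => (Derive phi u * r u - phi u * Derive r u) / r u ^ 2)).
    { intro u. symmetry. apply Derive_div; [apply Hphi | apply (Hr 1%nat) | apply Hr0]. }
    auto_derive. repeat split; first [apply Hphi | apply (Hr 1%nat) | apply (Hr 2%nat)
      | apply Rgt_not_eq; pose proof (Hpos s); nra].
Qed.

Lemma Lop_mul_r lam v s : twice_derivable v ->
  Lop a C r z lam (fun u => r u * v u) s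
  = v s * Lop a C r z 1 r s
    + r s * (Derive (Derive v) s + (2 * Derive r s / r s + drift s) * Derive v s)
    - (lam - 1) / r s * v s.
Proof.
  intro Hv.
  assert (D1 : forall u, Derive (fun u => r u * v u) u = Derive r u * v u + r u * Derive v u).
  { intro u. apply Derive_mult; [apply (Hr 1%nat) | apply Hv]. }
  assert (D2 : Derive (Derive (fun u => r u * v u)) s
    = Derive (Derive r) s * v s + 2 * Derive r s * Derive v s + r s * Derive (Derive v) s).
  { rewrite (Derive_ext _ _ s D1), Derive_plus, !Derive_mult;
      first [ring | apply (Hr 1%nat) | apply (Hr 2%nat) | apply Hv | idtac].
    - apply ex_derive_mult; [apply (Hr 2%nat) | apply Hv].
    - apply ex_derive_mult; [apply (Hr 1%nat) | apply Hv]. }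
  unfold Lop. rewrite D2, D1. unfold drift. field. apply Rgt_not_eq, Hpos.
Qed.

Lemma eigval_ge_negC lam mu phi : 1 <= lam -> eig lam mu phi -> - C <= mu.
Proof.
  intros Hlam [Hpe [Hd [[s1 Hs1] HE]]].
  destruct (Rle_or_lt (- C) mu) as [Hmu|Hmu]; [exact Hmu|exfalso].
  set (v := fun u => phi u / r u).
  assert (Hv : twice_derivable v) by exact (twice_derivable_div_r phi Hd).
  assert (Hphi : forall u, phi u = r u * v u).
  { intro u. unfold v. field. apply Rgt_not_eq, Hpos. }
  (* Since L_1 rho = C rho, the quotient phi / rho solves an equation whose zeroth-order
     coefficient is positive when mu < - C. *)
  assert (Hode : forall s, Derive (Derive v) s + (2 * Derive r s / r s + drift s) * Derive v s
                           = ((lam - 1) / r s ^ 2 - C - mu) * v s).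
  { intro s. specialize (HE s).
    rewrite (Lop_ext _ _ _ _ Hphi), (Lop_mul_r _ _ _ Hv), HLr, Hphi in HE.
    apply (Rmult_eq_reg_l (r s)); [|apply Rgt_not_eq, Hpos].
    transitivity (- mu * (r s * v s) - v s * (C * r s) + (lam - 1) / r s * v s); [lra|].
    field. apply Rgt_not_eq, Hpos. }
  apply Hs1. rewrite Hphi.
  rewrite (periodic_ode_pos_coef_zero Lc v (fun s => 2 * Derive r s / r s + drift s)
             (fun s => (lam - 1) / r s ^ 2 - C - mu) HL) with (s := s1);
    [ring | | exact Hv | exact Hode |].
  - intro s. unfold v. rewrite Hpe. destruct (Hper s) as [-> _]. reflexivity.
  - intro s. assert (0 <= (lam - 1) / r s ^ 2)
      by (apply Rdiv_le_0_compat; [lra | apply pow_lt, Hpos]).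
    lra.
Qed.

Lemma eigfun_lam0_const phi : eig 0 0 phi -> forall s t, phi s = phi t.
Proof.
  intros [Hpe [Hd [_ HE]]].
  assert (Hflux : forall x y, weight x * Derive phi x = weight y * Derive phi y).
  { apply is_derive_zero_const. intro x.
    replace 0 with (weight x * (Lop a C r z 0 phi x + 0 / r x ^ 2 * phi x))
      by (rewrite HE; field; apply Rgt_not_eq, Hpos).
    apply weight_flux_derive; exact Hd. }
  destruct (periodic_max_C2 phi Lc HL Hpe Hd) as [s0 [_ [_ [D0 _]]]].
  apply is_derive_zero_const. intro x.
  assert (Dx : Derive phi x = 0).
  { specialize (Hflux x s0). rewrite D0, Rmult_0_r in Hflux.
    pose proof (weight_pos x). apply Rmult_integral in Hflux. destruct Hflux; [lra | assumption]. }
  rewrite <- Dx. apply Derive_correct, Hd.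
Qed.

Lemma weight_bounds : exists Wm WM, 0 < Wm /\ forall x, Wm <= weight x <= WM.
Proof.
  assert (Hc : forall s, continuity_pt weight s)
    by (intro; apply continuity_pt_of_ex_derive; eexists; apply weight_derive).
  destruct (periodic_max Lc weight HL weight_periodic Hc) as [sM [_ HM]].
  destruct (periodic_min Lc weight HL weight_periodic Hc) as [sm [_ Hm]].
  exists (weight sm), (weight sM). split; [apply weight_pos|]. split; auto.
Qed.

(* The flux w phi' vanishes at s0 and has derivative - mu w phi. *)
Lemma eigfun_flux_bound mu phi WM K s0 : 0 <= mu -> eig 0 mu phi ->
  (forall x, weight x <= WM) -> (forall x, Rabs (phi x) <= K) -> Derive phi s0 = 0 ->
  forall x, weight x * Rabs (Derive phi x) <= WM * mu * K * Rabs (x - s0).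
Proof.
  intros Hmu [_ [Hd [_ HE]]] HWM HK D0 x.
  assert (Hg : forall t, is_derive (fun u => weight u * Derive phi u) t
                                   (- mu * (weight t * phi t))).
  { intro t. replace (- mu * (weight t * phi t))
      with (weight t * (Lop a C r z 0 phi t + 0 / r t ^ 2 * phi t))
      by (rewrite HE; field; apply Rgt_not_eq, Hpos).
    apply weight_flux_derive; exact Hd. }
  assert (Hbound : Rabs (weight x * Derive phi x - weight s0 * Derive phi s0)
                   <= WM * mu * K * Rabs (x - s0)).
  { apply (bounded_variation (fun u => weight u * Derive phi u)
                              (fun t => - mu * (weight t * phi t)) _ s0 x).
    intros t _. split; [apply Hg|].
    rewrite !Rabs_mult, Rabs_Ropp, (Rabs_pos_eq mu Hmu), (Rabs_pos_eq (weight t))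
      by (left; apply weight_pos).
    specialize (HK t). specialize (HWM t). pose proof (weight_pos t).
    assert (0 <= mu * K) by (pose proof (Rabs_pos (phi t)); nra).
    apply Rle_trans with (mu * (weight t * K)); [|nra].
    apply Rmult_le_compat_l; [lra|]. apply Rmult_le_compat_l; lra. }
  rewrite D0, Rmult_0_r, Rminus_0_r, Rabs_mult, (Rabs_pos_eq (weight x)) in Hbound
    by (left; apply weight_pos).
  exact Hbound.
Qed.

(* phi has a zero, and |phi'| <= (WM / Wm) mu max|phi| Lc on a period,
   so max|phi| <= (WM / Wm) mu max|phi| Lc^2. *)
Lemma eigval_lam0_gap : exists c, 0 < c /\ forall mu phi, eig 0 mu phi -> 0 < mu -> c <= mu.
Proof.
  destruct weight_bounds as [Wm [WM [HWm0 HW]]].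
  assert (HWM0 : 0 < WM) by (specialize (HW 0); lra).
  assert (HLc2 : 0 < WM * Lc ^ 2) by (apply Rmult_lt_0_compat; [lra | apply pow_lt, HL]).
  exists (Wm / (WM * Lc ^ 2)). split; [apply Rdiv_lt_0_compat; lra|].
  intros mu phi He Hmu. pose proof He as [Hpe [Hd [[s2 Hs2] _]]].
  destruct (periodic_abs_max phi Lc HL Hpe (fun s => proj1 (Hd s))) as [s0 [Hs0 [HK Hcrit]]].
  set (K := Rabs (phi s0)) in *.
  assert (HK0 : 0 < K) by (pose proof (Rabs_pos_lt _ Hs2); specialize (HK s2); lra).
  assert (D0 : Derive phi s0 = 0).
  { apply Rmult_integral in Hcrit. destruct Hcrit as [H0|H0]; [|exact H0].
    unfold K in HK0. rewrite H0, Rabs_R0 in HK0. lra. }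
  destruct (periodic_ode_neg_coef_root Lc phi drift (fun s => 0 / r s ^ 2 - mu) HL Hpe Hd
              (eigpair_ode 0 mu phi He)) as [s1 [Hs1 Hz1]].
  { intro s. unfold Rdiv. rewrite Rmult_0_l. lra. }
  destruct (MVT_abs phi (Derive phi) s0 s1) as [c [Hmvt Hc]].
  { intros c _. apply is_derive_Reals, Derive_correct, Hd. }
  rewrite Hz1, Rminus_0_l, Rabs_Ropp in Hmvt. fold K in Hmvt.
  assert (Hdist : Rabs (s1 - s0) <= Lc) by (apply Rabs_le; lra).
  assert (Hcdist : Rabs (c - s0) <= Lc).
  { apply Rabs_le. destruct (Rle_or_lt s0 s1);
      [rewrite Rmin_left, Rmax_right in Hc | rewrite Rmin_right, Rmax_left in Hc]; lra. }
  pose proof (eigfun_flux_bound mu phi WM K s0 (Rlt_le _ _ Hmu) He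
                (fun x => proj2 (HW x)) HK D0 c) as Hflux.
  pose proof (HW c) as [HWc _]. pose proof (Rabs_pos (Derive phi c)).
  assert (Hslope : Wm * Rabs (Derive phi c) <= WM * mu * K * Lc).
  { apply Rle_trans with (weight c * Rabs (Derive phi c)); [nra|].
    apply Rle_trans with (WM * mu * K * Rabs (c - s0)); [exact Hflux|].
    apply Rmult_le_compat_l; [|exact Hcdist]. repeat apply Rmult_le_pos; lra. }
  assert (HKbound : Wm * K <= K * (WM * mu * Lc ^ 2)).
  { assert (K <= Rabs (Derive phi c) * Lc) by (rewrite Hmvt; apply Rmult_le_compat_l; lra).
    apply Rle_trans with (Wm * Rabs (Derive phi c) * Lc); [nra|].
    replace (K * (WM * mu * Lc ^ 2)) with (WM * mu * K * Lc * Lc) by ring.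
    apply Rmult_le_compat_r; lra. }
  apply Rmult_le_reg_r with (WM * Lc ^ 2); [exact HLc2|].
  unfold Rdiv. rewrite Rmult_assoc, Rinv_l, Rmult_1_r by lra. nra.
Qed.

Let mu := mu_ev a C r z Lc.

Lemma mu_ev_lam0_0 : mu 0 (lamS1 0) = Finite 0.
Proof.
  rewrite lamS1_0. apply Rbar_le_antisym.
  - apply mu_ev_le, (cnt_ge_eigpair _ _ _ _ _ _ _ (fun _ => 1)).
    assert (D1 : forall s, Derive (fun _ : R => 1) s = 0) by (intro; apply Derive_const).
    split; [intro; reflexivity|]. split; [|split].
    + intro s. split; [apply ex_derive_const|].
      apply (ex_derive_ext (fun _ => 0)); [intro; rewrite D1; reflexivity | apply ex_derive_const].
    + exists 0. lra.
    + intro s. unfold Lop. rewrite (Derive_ext _ (fun _ => 0)) by exact D1.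
      rewrite D1, Derive_const. field. apply Rgt_not_eq, Hpos.
  - apply mu_ev_ge_eigval. intros m phi He. exact (eigval_nonneg 0 m phi (Rle_refl 0) He).
Qed.

Lemma mu_ev_lam1_0 : mu 0 (lamS1 1) = Finite (- C).
Proof.
  rewrite lamS1_1. apply Rbar_le_antisym.
  - apply mu_ev_le, (cnt_ge_eigpair _ _ _ _ _ _ _ r).
    split; [intro s; apply Hper|]. split; [|split].
    + intro s. split; [apply (Hr 1%nat) | apply (Hr 2%nat)].
    + exists 0. apply Rgt_not_eq, Hpos.
    + intro s. rewrite HLr. ring.
  - apply mu_ev_ge_eigval. intros m phi He. exact (eigval_ge_negC 1 m phi (Rle_refl 1) He).
Qed.

Lemma mu_ev_ge_negC i j : (1 <= i)%nat -> Rbar_le (- C) (mu j (lamS1 i)).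
Proof.
  intro Hi. apply mu_ev_ge_eigval. intros m phi He.
  exact (eigval_ge_negC _ m phi (lamS1_ge1 i Hi) He).
Qed.

(* Two eigenfunctions with eigenvalue 0 are constant, hence linearly dependent. *)
Lemma mu_ev_lam0_1_pos : exists c, 0 < c /\ Rbar_le c (mu 1 (lamS1 0)).
Proof.
  destruct eigval_lam0_gap as [c [Hc Hgap]]. exists c. split; [exact Hc|].
  rewrite lamS1_0. apply mu_ev_ge. intros t [phi [m [Hk Hli]]]. simpl.
  destruct (Rle_or_lt c t) as [Hle|Hlt]; [exact Hle|exfalso].
  assert (Hconst : forall k s, (k < 2)%nat -> phi k s = phi k 0).
  { intros k s Hk2. destruct (Hk k Hk2) as [He Hm].
    apply eigfun_lam0_const. replace 0 with (m k) at 2; [exact He|].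
    destruct (Rle_lt_or_eq_dec 0 (m k) (eigval_nonneg 0 _ _ (Rle_refl 0) He)) as [Hpos'|H0];
      [specialize (Hgap _ _ He Hpos'); lra | auto]. }
  set (coef := fun k => match k with 0%nat => phi 1%nat 0 | _ => - phi 0%nat 0 end).
  assert (Hsum : forall s, sumk 2 (fun k => coef k * phi k s) = 0).
  { intro s. simpl. rewrite (Hconst 0%nat s), (Hconst 1%nat s) by lia. ring. }
  destruct (Hk 1%nat ltac:(lia)) as [[_ [_ [[s1 Hs1] _]]] _].
  apply Hs1. rewrite (Hconst 1%nat s1) by lia. exact (Hli coef Hsum 0%nat ltac:(lia)).
Qed.

End Spectrum.

Lemma Rbar_le_min (x y w : Rbar) : Rbar_le x y -> Rbar_le x w -> Rbar_le x (Rbar_min y w).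
Proof. intros H1 H2. apply Rbar_min_case; assumption. Qed.

Lemma Glb_Rbar_nonzero_spectrum (mu : nat -> nat -> Rbar) (c d : R) :
  mu 0%nat 0%nat = Finite 0 ->
  0 < c -> Rbar_le c (mu 1%nat 0%nat) ->
  (forall j k, (j <= k)%nat -> Rbar_le (mu j 0%nat) (mu k 0%nat)) ->
  0 < d -> mu 0%nat 1%nat = Finite d ->
  (forall i j, (1 <= i)%nat -> Rbar_le d (mu j i)) ->
  Glb_Rbar (fun x => exists i j, mu j i = Finite x /\ x <> 0)
  = Rbar_min (Rbar_min (mu 1%nat 0%nat) (mu 2%nat 0%nat)) (mu 0%nat 1%nat).
Proof.
  intros H00 Hc H10 Hmono Hd H01 Hd_le.
  destruct (Glb_Rbar_correct (fun x => exists i j, mu j i = Finite x /\ x <> 0)) as [Hlb Hglb].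
  apply Rbar_le_antisym.
  - assert (Hm1 : Rbar_le (Glb_Rbar (fun x => exists i j, mu j i = Finite x /\ x <> 0))
                          (mu 1%nat 0%nat)).
    { destruct (mu 1%nat 0%nat) as [y| |] eqn:Ey; simpl in H10.
      - apply Hlb. exists 0%nat, 1%nat. split; [exact Ey | lra].
      - destruct (Glb_Rbar _); simpl; trivial.
      - contradiction. }
    apply Rbar_le_min; [apply Rbar_le_min|].
    + exact Hm1.
    + eapply Rbar_le_trans; [exact Hm1 | apply Hmono; lia].
    + rewrite H01. apply Hlb. exists 1%nat, 0%nat. split; [exact H01 | lra].
  - apply Hglb. intros x [i [j [Hx Hx0]]]. destruct i as [|i].
    + destruct j as [|j].
      * rewrite H00 in Hx. injection Hx as Hx. subst. contradiction.
      * rewrite <- Hx. eapply Rbar_le_trans; [apply Rbar_min_l|].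
        eapply Rbar_le_trans; [apply Rbar_min_l | apply Hmono; lia].
    + eapply Rbar_le_trans; [apply Rbar_min_r|]. rewrite H01, <- Hx. apply Hd_le. lia.
Qed.

Theorem lemma5p3 (C a : R) (r z : R -> R) (Lc : R) :
  C < 0 ->
  (* E : smooth closed curve in the XZ-plane, arc-length parametrized, length Lc *)
  0 < Lc ->
  (forall n s, ex_derive_n r n s) -> (forall n s, ex_derive_n z n s) ->
  (forall s, r (s + Lc) = r s /\ z (s + Lc) = z s) ->
  (forall s, Derive r s ^ 2 + Derive z s ^ 2 = 1) ->
  (* simple *)
  (forall s t, 0 <= s < Lc -> 0 <= t < Lc -> r s = r t -> z s = z t -> s = t) ->
  (* not meeting the Z-axis; rho = r *)
  (forall s, 0 < r s) ->
  (* invariant under z -> -z *)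
  (forall s, exists t, r t = r s /\ z t = - z s) ->
  (* the torus of revolution is a shrinker:  H = C F^perp *)
  (forall s th, meancurv (revsurf r z) s th =
                nproj (revsurf r z) s th (vscal C (revsurf r z s th))) ->
  let mu := mu_ev a C r z Lc in
  let m := Glb_Rbar (fun x => exists i j, mu j (lamS1 i) = Finite x /\ x <> 0) in
  m = Rbar_min (Rbar_min (mu 1%nat (lamS1 0)) (mu 2%nat (lamS1 0))) (mu 0%nat (lamS1 1))
  /\ (m = mu 0%nat (lamS1 1) -> mu 0%nat (lamS1 1) = Finite (- C)).
Proof.
  intros HC HL Hr Hz Hper Hunit _ Hpos _ Hshrink mu m.
  assert (HLr : forall s, Lop a C r z 1 r s = C * r s) by (apply Lop1_r; assumption).
  assert (H01 : mu 0%nat (lamS1 1) = Finite (- C)) by (apply mu_ev_lam1_0; assumption).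
  split; [|intros _; exact H01].
  destruct (mu_ev_lam0_1_pos C a r z Lc) as [c [Hc H10]]; try assumption.
  apply (Glb_Rbar_nonzero_spectrum (fun j i => mu j (lamS1 i)) c (- C));
    [apply mu_ev_lam0_0; assumption | exact Hc | exact H10 | | lra | exact H01 |].
  - intros j k Hjk. apply mu_ev_mono, Hjk.
  - intros i j Hi. apply mu_ev_ge_negC; assumption.
Qed.
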